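(* Let $S$ be a finite set of distinct lines in the plane, each having one of three distinct slopes, such that no point lies on three lines of $S$. Let $x\ge y\ge z$ be the numbers of lines of $S$ in the three slope classes. Consider the following greedy algorithm: while there exists a point at which two not-yet-hit lines of $S$ cross, choose such a point whose two lines belong to the two slope classes currently having the largest numbers of unhit lines, and mark these two lines as hit; afterwards, place one point on each remaining unhit line. This algorithm produces a minimum-cardinality hitting set for $S$, and the minimum number of points in a hitting set for $S$ is $$OPT_2(x,y,z)=\begin{cases} x & \text{if } x\ge y+z,\\ \lceil (x+y+z)/2\rceil & \text{if } x<y+z.\end{cases}$$
   Context: A hitting set for a set of lines is a finite set of points such that every line contains at least one of the points. *)

From HB Require Import structures.
From mathcomp Require Import all_boot all_order all_algebra.
Set Implicit Arguments. Unset Strict Implicit. Unset Printing Implicit Defensive.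
Import Order.TTheory GRing.Theory Num.Theory.

Section Lines.
Variable R : realFieldType.
Local Open Scope ring_scope.

Definition point := (R * R)%type.

(* A line is represented by a triple ((a, b), c) with (a, b) <> (0, 0);
   it is the set of points (u, v) with a*u + b*v = c. *)
Definition line := (R * R * R)%type.

Definition is_line (l : line) : bool := (l.1.1, l.1.2) != (0, 0).

Definition on_line (l : line) (p : point) : bool :=
  l.1.1 * p.1 + l.1.2 * p.2 == l.2.

(* l has slope (direction) d : the vector d is parallel to l. *)
Definition has_slope (d : R * R) (l : line) : bool :=
  l.1.1 * d.1 + l.1.2 * d.2 == 0.

Definition non_parallel (d e : R * R) : bool := d.1 * e.2 - d.2 * e.1 != 0.

Definition hitting (S : seq line) (H : seq point) : Prop :=
  forall l, l \in S -> exists2 p, p \in H & on_line l p.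

Definition dir3 (d0 d1 d2 : R * R) (i : 'I_3) : R * R := nth d0 [:: d0; d1; d2] i.

Definition ucount (dir : 'I_3 -> R * R) (U : seq line) (i : 'I_3) : nat :=
  count (has_slope (dir i)) U.

Definition top_two (dir : 'I_3 -> R * R) (U : seq line) (i j : 'I_3) : Prop :=
  i != j /\ forall k, k != i -> k != j ->
    (ucount dir U k <= ucount dir U i)%N /\ (ucount dir U k <= ucount dir U j)%N.

(* State of the greedy algorithm: (unhit lines, points chosen so far). *)
Definition greedy_step (dir : 'I_3 -> R * R)
    (st st' : seq line * seq point) : Prop :=
  exists (p : point) (l m : line) (i j : 'I_3),
    [/\ l \in st.1, m \in st.1, l != m, on_line l p & on_line m p] /\
    [/\ has_slope (dir i) l, has_slope (dir j) m, top_two dir st.1 i j &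
        st' = (rem m (rem l st.1), p :: st.2)].

Definition greedy_done (U : seq line) : Prop :=
  ~ exists (p : point) (l m : line),
      [/\ l \in U, m \in U, l != m, on_line l p & on_line m p].

Inductive greedy_reach (S : seq line) (dir : 'I_3 -> R * R) :
    seq line * seq point -> Prop :=
  | greedy_init : greedy_reach S dir (S, [::])
  | greedy_next st st' :
      greedy_reach S dir st -> greedy_step dir st st' -> greedy_reach S dir st'.

End Lines.

Definition OPT2 (x y z : nat) : nat :=
  if (y + z <= x)%N then x else ((x + y + z + 1) %/ 2)%N.

From HB Require Import structures.
From mathcomp Require Import all_boot all_order all_algebra.
From mathcomp Require Import ring zify.
Import Order.TTheory GRing.Theory Num.Theory.

(* Let [c i] count the unhit lines of slope class [i] and
   [opt3 = max (c 0, c 1, c 2, ceil ((c 0 + c 1 + c 2) / 2))].  A point lies on at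
   most two lines of S and on at most one line of each class, so every hitting set
   has at least [opt3] points.  Two lines of different classes meet in a point lying
   on no other line; a greedy step removes one line from each of the two largest
   classes and lowers [opt3] by exactly one.  When the greedy phase stops, all unhit
   lines are parallel, so [opt3] is their number and one point per line finishes:
   the greedy set has [opt3] of the initial counts points, which is [OPT2 x y z]. *)

Set Implicit Arguments. Unset Strict Implicit. Unset Printing Implicit Defensive.

Definition o0 : 'I_3 := @Ordinal 3 0 isT.
Definition o1 : 'I_3 := @Ordinal 3 1 isT.
Definition o2 : 'I_3 := @Ordinal 3 2 isT.

Lemma ord3P (k : 'I_3) : [\/ k = o0, k = o1 | k = o2].
Proof.
by case: k => [[|[|[|k]]] lt_k3] //; [apply: Or31 | apply: Or32 | apply: Or33];
  apply: val_inj.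
Qed.

Definition opt3 (a b c : nat) : nat := maxn (maxn a b) (maxn c ((a + b + c + 1) %/ 2)).

(* [top_two dir U] unfolds to [top_pair (ucount dir U)]. *)
Definition top_pair (c : 'I_3 -> nat) (i j : 'I_3) : Prop :=
  i != j /\ forall k, k != i -> k != j -> c k <= c i /\ c k <= c j.

Lemma opt3_sorted x y z : y <= x -> z <= y -> opt3 x y z = OPT2 x y z.
Proof. by rewrite /opt3 /OPT2; case: ifP; lia. Qed.

Lemma opt3_le a b c h : a <= h -> b <= h -> c <= h -> a + b + c <= 2 * h ->
  opt3 a b c <= h.
Proof. rewrite /opt3; lia. Qed.

Lemma opt3_top_pair_step (c c' : 'I_3 -> nat) i j : top_pair c i j ->
  (forall k, c k = (i == k) + (j == k) + c' k) ->
  opt3 (c o0) (c o1) (c o2) = (opt3 (c' o0) (c' o1) (c' o2)).+1.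
Proof.
move=> [ij top] dec; move: (dec o0) (dec o1) (dec o2) => {dec}.
by case: (ord3P i) ij top => ->; case: (ord3P j) => -> //= _ top;
  [have := top o2 | have := top o1 | have := top o2 | have := top o0
  | have := top o1 | have := top o0] => /(_ isT isT); rewrite /opt3; lia.
Qed.

Lemma top_pair_exists (c : 'I_3 -> nat) : exists i j, top_pair c i j.
Proof.
have [] := leqP (c o0) (c o1); have [] := leqP (c o0) (c o2);
  have [] := leqP (c o1) (c o2) => *;
  first [ by exists o1, o2; split => // k; case: (ord3P k) => -> // _ _; lia
        | by exists o0, o2; split => // k; case: (ord3P k) => -> // _ _; lia
        | by exists o0, o1; split => // k; case: (ord3P k) => -> // _ _; lia ].
Qed.

Lemma top_pair_pos_or_single (c : 'I_3 -> nat) :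
  (exists i j, top_pair c i j /\ 0 < c i /\ 0 < c j) \/
  (exists i, forall k, k != i -> c k = 0).
Proof.
have [i [j [ij top]]] := top_pair_exists c.
have [ci0|ci_pos] := posnP (c i); last have [cj0|cj_pos] := posnP (c j).
- right; exists j => k kj; have [->|ki] := eqVneq k i; first exact: ci0.
  by have [+ _] := top k ki kj; rewrite ci0 leqn0 => /eqP.
- right; exists i => k ki; have [->|kj] := eqVneq k j; first exact: cj0.
  by have [_] := top k ki kj; rewrite cj0 leqn0 => /eqP.
- by left; exists i, j.
Qed.

Lemma count_has_le (T1 T2 : Type) (r : T1 -> T2 -> bool) (L : seq T1) (P : seq T2) k :
  (forall p, count (r^~ p) L <= k) -> count (fun l => has (r l) P) L <= k * size P.
Proof.
move=> cover; elim: P => [|p P IH]; first by rewrite (@eq_count _ _ pred0) ?count_pred0.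
rewrite (@eq_count _ _ (predU (r^~ p) (fun l => has (r l) P))) //.
have := count_predUI (r^~ p) (fun l => has (r l) P) L.
have := cover p; rewrite /= mulnS; lia.
Qed.

Lemma count_le1 (T : eqType) (a : pred T) (s : seq T) : uniq s ->
  {in s &, forall x y, a x -> a y -> x = y} -> count a s <= 1.
Proof.
move=> s_uniq a_eq; rewrite -size_filter.
case E: (filter a s) => [//|x t].
have : x \in filter a s by rewrite E mem_head.
rewrite mem_filter -E => /andP [ax xs]; apply: (uniq_leq_size (s2 := [:: x])).
  exact: filter_uniq.
by move=> y; rewrite mem_filter inE => /andP [ay ys]; apply/eqP; apply: a_eq.
Qed.

Section PlaneGeometry.
Variable R : realFieldType.
Local Open Scope ring_scope.
Implicit Types (d e : R * R) (l m : line R) (p q : point R).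

Lemma non_parallelC d e : non_parallel d e = non_parallel e d.
Proof. by rewrite /non_parallel -oppr_eq0; congr (_ != _); ring. Qed.

Lemma non_parallel_neq0 d e : non_parallel d e -> d != (0, 0).
Proof. by case: d => a b; apply: contra => /eqP [-> ->]; rewrite /non_parallel !mul0r subrr. Qed.

Lemma mul_pair_eq0 (a b u : R) : (a, b) != (0, 0) -> a * u = 0 -> b * u = 0 -> u = 0.
Proof.
move=> ab /eqP au /eqP bu; apply/eqP; apply: contraNT ab => u0.
by move: au bu; rewrite !mulf_eq0 (negbTE u0) !orbF => /eqP -> /eqP ->.
Qed.

Lemma has_slopeN d e l : is_line l -> non_parallel d e -> has_slope d l -> ~~ has_slope e l.
Proof.
case: l => [[a b] c]; case: d => d1 d2; case: e => e1 e2.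
rewrite /is_line /non_parallel /has_slope /= => ab de /eqP ld; apply: contra de => /eqP le.
apply/eqP; apply: (mul_pair_eq0 ab).
- have -> : a * (d1 * e2 - d2 * e1) = e2 * (a * d1 + b * d2) - d2 * (a * e1 + b * e2) by ring.
  by rewrite ld le !mulr0 subrr.
- have -> : b * (d1 * e2 - d2 * e1) = d1 * (a * e1 + b * e2) - e1 * (a * d1 + b * d2) by ring.
  by rewrite ld le !mulr0 subrr.
Qed.

Lemma lines_meet d e l m : is_line l -> is_line m -> non_parallel d e ->
  has_slope d l -> has_slope e m -> exists p, on_line l p && on_line m p.
Proof.
move=> ll lm de dl em.
have le := has_slopeN ll de dl.
have md : ~~ has_slope d m by apply: has_slopeN lm _ em; rewrite non_parallelC.
move: dl em le md de {ll lm}; case: l => [[a b] c]; case: m => [[a' b'] c'].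
case: d => d1 d2; case: e => e1 e2; rewrite /has_slope /non_parallel /=.
move=> /eqP ld /eqP me le md de.
(* Cauchy-Binet for the 2x2 matrices of normals and of directions. *)
have det_np : (a * b' - b * a') * (d1 * e2 - d2 * e1) =
    (a * d1 + b * d2) * (a' * e1 + b' * e2) - (a * e1 + b * e2) * (a' * d1 + b' * d2).
  by ring.
have det0 : a * b' - b * a' != 0.
  apply: contraNneq (mulf_neq0 le md) => det0.
  have : (a * b' - b * a') * (d1 * e2 - d2 * e1) = 0 by rewrite det0 mul0r.
  by rewrite det_np ld mul0r sub0r => /eqP; rewrite oppr_eq0.
exists ((c * b' - b * c') / (a * b' - b * a'), (a * c' - c * a') / (a * b' - b * a')).
by rewrite /on_line /=; apply/andP; split; apply/eqP; field.
Qed.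

Lemma on_line_slope d l p q : is_line l -> d != (0, 0) -> has_slope d l -> on_line l p ->
  on_line l q = ((q.1 - p.1) * d.2 == (q.2 - p.2) * d.1).
Proof.
case: l => [[a b] c]; case: d => d1 d2; case: p => p1 p2; case: q => q1 q2.
rewrite /is_line /has_slope /on_line /= => ab d0 /eqP ld /eqP lp.
have -> : (a * q1 + b * q2 == c) = (a * (q1 - p1) + b * (q2 - p2) == 0).
  by rewrite -subr_eq0 -lp; congr (_ == 0); ring.
rewrite -[RHS]subr_eq0.
move: (q1 - p1) (q2 - p2) => w1 w2; apply/eqP/eqP => h.
- apply: (mul_pair_eq0 ab).
  + have -> : a * (w1 * d2 - w2 * d1) = d2 * (a * w1 + b * w2) - w2 * (a * d1 + b * d2) by ring.
    by rewrite h ld !mulr0 subrr.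
  + have -> : b * (w1 * d2 - w2 * d1) = w1 * (a * d1 + b * d2) - d1 * (a * w1 + b * w2) by ring.
    by rewrite h ld !mulr0 subrr.
- apply: (mul_pair_eq0 d0).
  + have -> : d1 * (a * w1 + b * w2) = w1 * (a * d1 + b * d2) - b * (w1 * d2 - w2 * d1) by ring.
    by rewrite h ld !mulr0 subrr.
  + have -> : d2 * (a * w1 + b * w2) = a * (w1 * d2 - w2 * d1) + w2 * (a * d1 + b * d2) by ring.
    by rewrite h ld !mulr0 addr0.
Qed.

Definition base_point l : point R :=
  if l.1.1 != 0 then (l.2 / l.1.1, 0) else (0, l.2 / l.1.2).

Lemma base_point_on l : is_line l -> on_line l (base_point l).
Proof.
case: l => [[a b] c]; rewrite /base_point /on_line /is_line /=.
have [-> /= b0|a0 _] := eqVneq a 0.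
  by rewrite mul0r add0r mulrC divfK //; apply: contraNneq b0 => ->.
by rewrite mulr0 addr0 mulrC divfK.
Qed.

End PlaneGeometry.

Section GreedyHittingSet.
Variables (R : realFieldType) (S : seq (line R)) (d0 d1 d2 : R * R).
Hypotheses (np01 : non_parallel d0 d1) (np02 : non_parallel d0 d2) (np12 : non_parallel d1 d2).
Hypothesis S_lines : all (@is_line R) S.
Hypothesis S_uniq : uniq S.
Hypothesis S_ext : forall l m, l \in S -> m \in S ->
  (forall p, on_line l p = on_line m p) -> l = m.
Hypothesis S_classes : all (fun l => [|| has_slope d0 l, has_slope d1 l | has_slope d2 l]) S.
Hypothesis S_two_per_point : forall p : point R, count (fun l => on_line l p) S <= 2.

Local Notation dir := (dir3 d0 d1 d2).
Implicit Types (U L : seq (line R)) (H : seq (point R)) (l m n : line R) (p q : point R).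

Definition opt_lines U : nat := opt3 (ucount dir U o0) (ucount dir U o1) (ucount dir U o2).

Lemma non_parallel_dir i j : i != j -> non_parallel (dir i) (dir j).
Proof.
by case: (ord3P i) => ->; case: (ord3P j) => -> //= _; rewrite /dir3 /= // non_parallelC.
Qed.

Lemma dir_neq0 i : dir i != (0, 0)%R.
Proof.
by case: (ord3P i) => ->;
  [apply: non_parallel_neq0 np01 | apply: non_parallel_neq0 np12
  | apply: (@non_parallel_neq0 _ _ d0); rewrite non_parallelC].
Qed.

Lemma slope_class l : l \in S -> exists i, has_slope (dir i) l.
Proof. by move/(allP S_classes) => /or3P [] h; [exists o0 | exists o1 | exists o2]. Qed.

Lemma slope_classE l i k : l \in S -> has_slope (dir i) l -> has_slope (dir k) l = (i == k).
Proof.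
move=> lS il; apply/idP/eqP => [kl|<- //]; apply/eqP; apply: contraTT kl => ik.
exact: has_slopeN (allP S_lines _ lS) (non_parallel_dir ik) il.
Qed.

Lemma parallel_meet_eq l m i p : l \in S -> m \in S ->
  has_slope (dir i) l -> has_slope (dir i) m -> on_line l p -> on_line m p -> l = m.
Proof.
move=> lS mS il im pl pm; apply: S_ext => // q.
by rewrite (on_line_slope _ (allP S_lines _ lS) (dir_neq0 i) il pl)
  (on_line_slope _ (allP S_lines _ mS) (dir_neq0 i) im pm).
Qed.

Lemma classes_cross U l m i j : {subset U <= S} -> l \in U -> m \in U ->
  has_slope (dir i) l -> has_slope (dir j) m -> i != j ->
  exists p, [/\ l \in U, m \in U, l != m, on_line l p & on_line m p].
Proof.
move=> US lU mU il jm ij.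
have [p /andP [pl pm]] := lines_meet (allP S_lines _ (US _ lU)) (allP S_lines _ (US _ mU))
  (non_parallel_dir ij) il jm.
exists p; split => //; apply: contraNneq ij => lm.
by rewrite -(slope_classE j (US _ lU) il) lm.
Qed.

Lemma crossing_off_third l m n p : l \in S -> m \in S -> n \in S ->
  l != m -> n != l -> n != m -> on_line l p -> on_line m p -> ~~ on_line n p.
Proof.
move=> lS mS nS lm nl nm pl pm; apply/negP => pn.
have : 3 <= count (fun l => on_line l p) S.
  rewrite -size_filter; apply: (uniq_leq_size (s1 := [:: l; m; n])).
    by rewrite /= !inE negb_or lm eq_sym nl eq_sym nm.
  by move=> x; rewrite !inE mem_filter => /or3P [] /eqP ->;
    [rewrite pl lS | rewrite pm mS | rewrite pn nS].
by rewrite leqNgt ltnS S_two_per_point.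
Qed.

Lemma ucount_sum U : {subset U <= S} ->
  ucount dir U o0 + ucount dir U o1 + ucount dir U o2 = size U.
Proof.
rewrite /ucount; elim: U => [|l U IH] US //=.
have lS : l \in S by apply: US; rewrite inE eqxx.
have {}IH := IH (fun n nU => US n (mem_behead (s := l :: U) nU)).
have [i il] := slope_class lS.
by rewrite !(slope_classE _ lS il) -IH; case: (ord3P i) => -> /=; lia.
Qed.

Lemma ucount_rem U l i k : l \in U -> l \in S -> has_slope (dir i) l ->
  ucount dir U k = (i == k) + ucount dir (rem l U) k.
Proof. by move=> lU lS il; rewrite /ucount (permP (perm_to_rem lU)) /= (slope_classE _ lS il). Qed.

Lemma single_class_done U i : {subset U <= S} ->
  (forall k, k != i -> ucount dir U k = 0) -> greedy_done U.
Proof.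
move=> US single [p [l [m [lU mU lm pl pm]]]].
have class_i n : n \in U -> has_slope (dir i) n.
  move=> nU; have [k kn] := slope_class (US _ nU); have [<- //|ki] := eqVneq k i.
  have : 0 < ucount dir U k by rewrite /ucount -has_count; apply/hasP; exists n.
  by rewrite single.
by move: lm; rewrite (parallel_meet_eq (US _ lU) (US _ mU) (class_i _ lU) (class_i _ mU) pl pm)
  eqxx.
Qed.

Lemma greedy_done_single U : {subset U <= S} -> greedy_done U ->
  exists i, forall k, k != i -> ucount dir U k = 0.
Proof.
move=> US done_U; case: (top_pair_pos_or_single (ucount dir U)) => [[i [j [[ij _] []]]]|//].
rewrite /ucount -!has_count => /hasP [l lU il] /hasP [m mU jm].
have [p crossing] := classes_cross US lU mU il jm ij.
by case: done_U; exists p, l, m.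
Qed.

Lemma opt_lines_single U i : {subset U <= S} ->
  (forall k, k != i -> ucount dir U k = 0) -> opt_lines U = size U.
Proof.
move=> US single; rewrite -(ucount_sum US) /opt_lines /opt3.
by case: (ord3P i) single => -> single; [move: (single o1 isT) (single o2 isT)
  | move: (single o0 isT) (single o2 isT) | move: (single o0 isT) (single o1 isT)]; lia.
Qed.

Definition greedy_inv U H : Prop :=
  [/\ {subset U <= S}, uniq U, uniq H,
      forall l, l \in S -> l \notin U -> exists2 p, p \in H & on_line l p &
      forall p l, p \in H -> l \in U -> ~~ on_line l p]
  /\ size H + opt_lines U = opt_lines S.

Lemma greedy_inv_step U H U' H' : greedy_inv U H ->
  greedy_step dir (U, H) (U', H') -> greedy_inv U' H'.
Proof.
move=> [[US U_uniq H_uniq hitH missH] sizeH].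
case=> p [l [m [i [j [[lU mU lm pl pm] [il jm top [-> ->]]]]]]] /=.
rewrite /= in lU mU; have lS := US l lU; have mS := US m mU.
have mUl : m \in rem l U by rewrite (mem_rem_uniq _ U_uniq) inE eq_sym lm.
have memU n : (n \in rem m (rem l U)) = [&& n != m, n != l & n \in U].
  by rewrite (mem_rem_uniq _ (rem_uniq _ U_uniq)) inE (mem_rem_uniq _ U_uniq) inE.
have dec k : ucount dir U k = (i == k) + (j == k) + ucount dir (rem m (rem l U)) k.
  by rewrite (ucount_rem k lU lS il) (ucount_rem k mUl mS jm) addnA.
split; first split.
- by move=> n; rewrite memU => /and3P [_ _ /US].
- exact/rem_uniq/rem_uniq.
- by rewrite /= H_uniq andbT; apply: contraL pl => /missH; apply.
- move=> n nS; rewrite memU.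
  have [-> _|_] := eqVneq n m; first by exists p; rewrite ?mem_head.
  have [-> _|_ /= nU] := eqVneq n l; first by exists p; rewrite ?mem_head.
  by have [q qH qn] := hitH n nS nU; exists q; rewrite // inE qH orbT.
- move=> q n; rewrite inE memU => /orP [/eqP -> | qH] /and3P [nm nl nU]; last exact: missH.
  exact: crossing_off_third lS mS (US _ nU) lm nl nm pl pm.
- by rewrite -sizeH /opt_lines (opt3_top_pair_step top dec) addSnnS.
Qed.

Lemma greedy_reach_inv U H : greedy_reach S dir (U, H) -> greedy_inv U H.
Proof.
suff inv st : greedy_reach S dir st -> greedy_inv st.1 st.2 by move/inv.
elim=> [|[U0 H0] [U1 H1] _ IH step]; last exact: greedy_inv_step IH step.
by split; first split => // l ->.
Qed.

Lemma greedy_run_exists : exists U H, greedy_reach S dir (U, H) /\ greedy_done U.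
Proof.
suff run (b : nat) U H : size U <= b -> greedy_reach S dir (U, H) ->
    exists U' H', greedy_reach S dir (U', H') /\ greedy_done U'.
  exact: (run _ _ _ (leqnn _) (greedy_init S dir)).
elim: b U H => [|b IH] U H sizeU reach; have [[US U_uniq _ _ _] _] := greedy_reach_inv reach.
all: case: (top_pair_pos_or_single (ucount dir U)) => [[i [j [top [ci cj]]]]|[i single]];
  last by exists U, H; split; last exact: single_class_done single.
  by move: (leq_trans ci (count_size (has_slope (dir i)) U)); rewrite ltnNge sizeU.
move: ci cj; rewrite /ucount -!has_count => /hasP [l lU il] /hasP [m mU jm].
have [p [_ _ lm pl pm]] := classes_cross US lU mU il jm top.1.
have mUl : m \in rem l U by rewrite (mem_rem_uniq _ U_uniq) inE eq_sym lm.
apply: (IH (rem m (rem l U)) (p :: H)).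
  rewrite size_rem // size_rem //; apply: leq_trans (leq_pred _) _.
  by rewrite -subn1 leq_subLR add1n.
by apply: (greedy_next reach); exists p, l, m, i, j; split; split.
Qed.

Lemma greedy_completion U H P : greedy_reach S dir (U, H) -> greedy_done U ->
  size P = size U ->
  (forall k, k < size U -> on_line (nth (0, 0, 0)%R U k) (nth (0, 0)%R P k)) ->
  hitting S (H ++ P) /\ size (undup (H ++ P)) = opt_lines S.
Proof.
move=> reach done_U sizeP onP.
have [[US U_uniq H_uniq hitH missH] sizeH] := greedy_reach_inv reach.
have P_uniq : uniq P.
  apply/(uniqP (0, 0)%R) => a b; rewrite !inE sizeP => aU bU Pab.
  apply/eqP; apply: contraT => ab; case: done_U.
  exists (nth (0, 0)%R P a), (nth (0, 0, 0)%R U a), (nth (0, 0, 0)%R U b).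
  split; [exact: mem_nth | exact: mem_nth | by rewrite nth_uniq | exact: onP |].
  by rewrite Pab; exact: onP.
have HP_uniq : uniq (H ++ P).
  rewrite cat_uniq H_uniq P_uniq andbT /=; apply/hasPn => _ /(nthP (0, 0)%R) [k kP <-].
  rewrite sizeP in kP; apply/negP => /missH /(_ (mem_nth (0, 0, 0)%R kP)).
  by rewrite onP.
split.
- move=> l lS; have [lU|lU] := boolP (l \in U); last first.
    by have [q qH ql] := hitH l lS lU; exists q; rewrite ?mem_cat ?qH.
  exists (nth (0, 0)%R P (index l U)).
    by rewrite mem_cat mem_nth ?orbT // sizeP index_mem.
  by rewrite -{1}(nth_index (0, 0, 0)%R lU); apply: onP; rewrite index_mem.
- have [i single] := greedy_done_single US done_U.
  by rewrite undup_id // size_cat sizeP -(opt_lines_single US single).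
Qed.

Lemma hitting_size_le k L H : (forall p, count (fun l => on_line l p) L <= k) ->
  hitting L H -> size L <= k * size (undup H).
Proof.
move=> cover hitL.
have all_hit : all (fun l => has (on_line l) (undup H)) L.
  by apply/allP => l /hitL [p pH pl]; apply/hasP; exists p; rewrite ?mem_undup.
by move: all_hit; rewrite all_count => /eqP <-; exact: count_has_le.
Qed.

Lemma hitting_opt_le H : hitting S H -> opt_lines S <= size (undup H).
Proof.
move=> hitH.
have class_le i : ucount dir S i <= size (undup H).
  rewrite /ucount -size_filter -[size (undup H)]mul1n; apply: hitting_size_le.
  - move=> p; apply: count_le1; first exact: filter_uniq.
    move=> l m; rewrite !mem_filter => /andP [il lS] /andP [im mS].
    exact: parallel_meet_eq lS mS il im.
  - by move=> l; rewrite mem_filter => /andP [_ /hitH].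
apply: opt3_le; try exact: class_le.
by rewrite (ucount_sum (fun _ lS => lS)); exact: hitting_size_le S_two_per_point hitH.
Qed.

Lemma optimal_hitting_set_exists : exists H, hitting S H /\ size (undup H) = opt_lines S.
Proof.
have [U [H [reach done_U]]] := greedy_run_exists.
have [[US _ _ _ _] _] := greedy_reach_inv reach.
exists (H ++ map (@base_point R) U).
apply: greedy_completion reach done_U (size_map _ _) _ => k kU.
by rewrite (nth_map (0, 0, 0)%R) // base_point_on // (allP S_lines) // US // mem_nth.
Qed.

End GreedyHittingSet.

Theorem mainTheorem3 (R : realFieldType) (S : seq (line R)) (d0 d1 d2 : R * R) :
  non_parallel d0 d1 -> non_parallel d0 d2 -> non_parallel d1 d2 ->
  all (@is_line R) S ->
  uniq S ->
  (forall l m, l \in S -> m \in S ->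
     (forall p, on_line l p = on_line m p) -> l = m) ->
  all (fun l => [|| has_slope d0 l, has_slope d1 l | has_slope d2 l]) S ->
  (forall p : point R, (count (fun l => on_line l p) S <= 2)%N) ->
  let x := count (has_slope d0) S in
  let y := count (has_slope d1) S in
  let z := count (has_slope d2) S in
  (y <= x)%N -> (z <= y)%N ->
  (forall H : seq (point R), hitting S H -> (OPT2 x y z <= size (undup H))%N) /\
  (exists H : seq (point R), hitting S H /\ size (undup H) = OPT2 x y z) /\
  (forall (U : seq (line R)) (H P : seq (point R)),
     greedy_reach S (dir3 d0 d1 d2) (U, H) -> greedy_done U ->
     size P = size U ->
     (forall k, (k < size U)%N -> on_line (nth (0, 0, 0)%R U k) (nth (0, 0)%R P k)) ->
     hitting S (H ++ P) /\ size (undup (H ++ P)) = OPT2 x y z).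
Proof.
move=> np01 np02 np12 S_lines S_uniq S_ext S_classes S_two x y z yx zy.
rewrite -(opt3_sorted yx zy).
split; [|split].
- exact: hitting_opt_le np01 np02 np12 S_lines S_uniq S_ext S_classes S_two.
- exact: optimal_hitting_set_exists np01 np02 np12 S_lines S_uniq S_ext S_classes S_two.
- exact: greedy_completion np01 np02 np12 S_lines S_uniq S_classes S_two.
Qed.
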